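(* Let $v\ge 2$ and $s\ge 2$ be integers. Then (1) $K_{v}^{RT}(2,s,s)\le v^{s-2}(v^{2}-1)$; (2) $K_{v}^{RT}(3,s,2s-1)\le v(v^{s}-1)$.
   Context: For positive integers $m,s$, the RT poset $[m\times s]$ is the set $\{1,\ldots,ms\}$ partitioned into $m$ blocks $B_i=\{is+1,\ldots,(i+1)s\}$; each block is a chain under the usual order of the integers, and elements of different blocks are incomparable. An ideal is a down-closed subset; $\langle A\rangle$ denotes the smallest ideal containing $A$. For $x,y\in\mathbb{Z}_v^{ms}$, $d_{RT}(x,y)=|\langle\{i:x_i\neq y_i\}\rangle|$. A code $C\subseteq \mathbb{Z}_v^{ms}$ is an $R$-covering if every $x\in\mathbb{Z}_v^{ms}$ has some $c\in C$ with $d_{RT}(x,c)\le R$; $K_v^{RT}(m,s,R)$ is the smallest size of an $R$-covering. *)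

From mathcomp Require Import all_boot.
Set Implicit Arguments. Unset Strict Implicit. Unset Printing Implicit Defensive.

(* Positions of the RT poset [m x s] are 0-indexed: 'I_(m*s), position j
   (paper's element j+1) lies in block j %/ s; the alphabet Z_v is 'I_v
   (only equality of symbols matters for d_RT). *)
Definition word (v m s : nat) := {ffun 'I_(m * s) -> 'I_v}.

Definition rt_le (s : nat) (n : nat) (j i : 'I_n) : bool :=
  (j %/ s == i %/ s) && (j <= i).

Definition rt_ideal (s n : nat) (A : {set 'I_n}) : {set 'I_n} :=
  [set j | [exists i in A, rt_le s j i]].

Definition supp_diff (v m s : nat) (x y : word v m s) : {set 'I_(m * s)} :=
  [set i | x i != y i].

Definition dRT (v m s : nat) (x y : word v m s) : nat :=
  #|rt_ideal s (supp_diff x y)|.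

Definition is_coveringb (v m s R : nat) (C : {set word v m s}) : bool :=
  [forall x : word v m s, [exists c in C, dRT x c <= R]].

(* K_v^RT(m,s,R): minimum size of an R-covering code.  The whole space is
   always a covering, so #|word| is a valid neutral element for the min. *)
Definition K_RT (v m s R : nat) : nat :=
  \big[minn/#|{: word v m s}|]_(C : {set word v m s} | is_coveringb R C) #|C|.

From HB Require Import structures.
From mathcomp Require Import all_boot zify.
Set Implicit Arguments. Unset Strict Implicit. Unset Printing Implicit Defensive.

(* The RT distance of two words is the sum, over the blocks, of the length
   of the shortest prefix of the block containing all their differences, so
   a code has covering radius R as soon as every word agrees with some
   codeword outside block prefixes of total length R.
   For two blocks take the words ([a, b & t], [0 ... 0 a b]) with
   (a, b) <> (0, 0).  A word whose first block starts with a nonzero pair is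
   matched on its whole first block; otherwise, if its second block ends
   with a nonzero pair (c, d), it is matched on [c, d & t] and on that end;
   otherwise ([1, 0 & t], [0 ... 0 1 0]) is at distance 1 + (s - 1).
   For three blocks take the words (u, [0 ... 0 t], u) with u <> 0: copy a
   nonzero outer block of the word, or else take u = [1, 0 ... 0], at
   distance 1 + (s - 1) + 1 <= 2s - 1. *)

HB.instance Definition _ := SemiGroup.isComLaw.Build nat minn minnA minnC.

Lemma leq_card_bigcup (I : Type) (T : finType) (r : seq I) (P : pred I)
    (F : I -> {set T}) :
  #|\bigcup_(i <- r | P i) F i| <= \sum_(i <- r | P i) #|F i|.
Proof.
elim/big_rec2: _ => [|i n U _ le_U_n]; first by rewrite cards0.
by apply: leq_trans (leq_card_setU _ _) _; rewrite leq_add2l.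
Qed.

Lemma sum_nth_le_sumn (ks : seq nat) m : \sum_(b < m) nth 0 ks b <= sumn ks.
Proof.
elim: ks m => [|k ks IHks] [|m]; rewrite ?big_ord0 //.
  by rewrite big1 // => b _; rewrite nth_nil.
by rewrite big_ord_recl leq_add2l.
Qed.

Lemma drop_nth_last (T : Type) (x0 : T) (u : seq T) n :
  size u = n.+1 -> drop n u = [:: nth x0 u n].
Proof. by move=> size_u; rewrite (drop_nth x0) ?size_u // drop_oversize ?size_u. Qed.

Lemma card_block_prefix n s b k :
  #|[set j : 'I_n | (j %/ s == b) && (j %% s < k)]| <= k.
Proof.
rewrite cardE -(size_map val) -[X in _ <= X](size_iota (b * s)).
apply: uniq_leq_size; first by rewrite (map_inj_uniq val_inj) enum_uniq.
move=> y /mapP [j]; rewrite mem_enum inE => /andP [/eqP j_b j_k] ->.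
by rewrite mem_iota [val j](divn_eq j s) j_b leq_addr ltn_add2l.
Qed.

Section RTBlocks.

Variables (v m s : nat) (z : 'I_v).
Implicit Types (x c : word v m s).

Lemma block_size_gt0 (i : 'I_(m * s)) : 0 < s.
Proof. by have := leq_ltn_trans (leq0n i) (ltn_ord i); rewrite muln_gt0 => /andP []. Qed.

Lemma block_index_lt (i : 'I_(m * s)) : i %/ s < m.
Proof. by rewrite ltn_divLR ?(block_size_gt0 i). Qed.

Lemma dRT_le_sum x c (K : nat -> nat) :
    (forall i : 'I_(m * s), x i != c i -> i %% s < K (i %/ s)) ->
  dRT x c <= \sum_(b < m) K b.
Proof.
move=> diff_short.
have ideal_sub : rt_ideal s (supp_diff x c) \subset
    \bigcup_(b < m) [set j : 'I_(m * s) | (j %/ s == b) && (j %% s < K b)].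
  apply/subsetP => j; rewrite inE.
  case/existsP => i /andP [xi_ci /andP [/eqP same_b j_le_i]].
  apply/bigcupP; exists (Ordinal (block_index_lt j)) => //; rewrite inE eqxx /=.
  rewrite same_b; apply: leq_ltn_trans (diff_short i _); last by rewrite inE in xi_ci.
  by rewrite -(leq_add2l (i %/ s * s)) -divn_eq -{1}same_b -divn_eq.
apply: leq_trans (subset_leq_card ideal_sub) _.
apply: leq_trans (leq_card_bigcup _ _ _) _; apply: leq_sum => b _.
exact: card_block_prefix.
Qed.

Definition block x b : s.-tuple 'I_v :=
  locked [tuple of mkseq (fun k => nth z (fgraph x) (b * s + k)) s].

Definition of_blocks (bs : seq (seq 'I_v)) : word v m s :=
  [ffun i : 'I_(m * s) => nth z (nth [::] bs (i %/ s)) (i %% s)].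

Lemma nth_block x (i : 'I_(m * s)) : nth z (block x (i %/ s)) (i %% s) = x i.
Proof.
rewrite /block -lock /= nth_mkseq ?ltn_pmod ?(block_size_gt0 i) //.
by rewrite -divn_eq nth_fgraph_ord.
Qed.

Lemma dRT_of_blocks_le x bs ks R :
    sumn ks <= R ->
    (forall b, b < m ->
       drop (nth 0 ks b) (block x b) = drop (nth 0 ks b) (nth [::] bs b)) ->
  dRT x (of_blocks bs) <= R.
Proof.
move=> ks_R agree; apply: leq_trans (leq_trans (sum_nth_le_sumn ks m) ks_R).
apply: dRT_le_sum => i; rewrite ffunE -nth_block.
apply: contraR; rewrite -leqNgt => le_k.
by rewrite -(subnKC le_k) -!nth_drop agree ?block_index_lt.
Qed.

Lemma K_RT_le_card R (T : finType) (P : {set T}) (enc : T -> word v m s) :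
  (forall x, exists2 p, p \in P & dRT x (enc p) <= R) -> K_RT v m s R <= #|P|.
Proof.
move=> cover; apply: leq_trans (leq_imset_card enc P).
rewrite /K_RT (bigD1 (enc @: P)) ?geq_minl //=.
apply/forallP => x; have [p Pp dist_p] := cover x.
by apply/existsP; exists (enc p); rewrite imset_f.
Qed.

End RTBlocks.

Arguments of_blocks {v m s} z bs.

Section TwoBlocks.

Variables (v n : nat) (z o : 'I_v).
Hypothesis o_neq_z : o != z.

Definition two_block_word (p : ('I_v * 'I_v) * n.-tuple 'I_v) : word v 2 n.+2 :=
  let: ((a, b), t) := p in of_blocks z [:: [:: a, b & t]; nseq n z ++ [:: a; b]].

Lemma two_block_covering (x : word v 2 n.+2) :
  exists2 p, p \in setX [set~ (z, z)] setT & dRT x (two_block_word p) <= n.+2.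
Proof.
have [a [b [t X0E]]] : exists a b (t : n.-tuple 'I_v),
    block z x 0 = [:: a, b & t] :> seq 'I_v.
  by case/tupleP: (block z x 0) => a u; case/tupleP: u => b t; exists a, b, t.
set c := nth z (block z x 1) n; set d := nth z (block z x 1) n.+1.
have X1_last2 : drop n (block z x 1) = [:: c; d].
  by rewrite (drop_nth z) ?size_tuple // (drop_nth_last z) ?size_tuple.
case: (eqVneq (a, b) (z, z)) => [[_ b_z] | ab_nz].
  case: (eqVneq (c, d) (z, z)) => [[_ d_z] | cd_nz].
    exists ((o, z), t); first by rewrite !inE xpair_eqE negb_and o_neq_z.
    apply: (dRT_of_blocks_le (ks := [:: 1; n.+1])); first by rewrite /=; lia.
    move=> [|[|//]] _ /=.
    - by rewrite X0E b_z.
    - rewrite (drop_nth_last z) ?size_tuple // -/d d_z.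
      by rewrite drop_cat size_nseq ltnNge leqnSn subSnn.
  exists ((c, d), t); first by rewrite !inE cd_nz.
  apply: (dRT_of_blocks_le (ks := [:: 2; n])); first by rewrite /=; lia.
  move=> [|[|//]] _ /=.
  - by rewrite X0E.
  - by rewrite X1_last2 drop_size_cat ?size_nseq.
exists ((a, b), t); first by rewrite !inE ab_nz.
apply: (dRT_of_blocks_le (ks := [:: 0; n.+2])); first by rewrite /=; lia.
move=> [|[|//]] _ /=.
- by rewrite X0E.
- by rewrite !drop_oversize ?size_tuple // addn2.
Qed.

Lemma K_RT_two_blocks : K_RT v 2 n.+2 n.+2 <= v ^ n * (v ^ 2 - 1).
Proof.
apply: leq_trans (K_RT_le_card two_block_covering) _.
by rewrite cardsX cardsC1 cardsT card_prod card_tuple card_ord mulnn subn1 mulnC.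
Qed.

End TwoBlocks.

Section ThreeBlocks.

Variables (v n : nat) (z o : 'I_v).
Hypothesis o_neq_z : o != z.

Definition three_block_word (p : n.+2.-tuple 'I_v * 'I_v) : word v 3 n.+2 :=
  let: (u, t) := p in of_blocks z [:: val u; rcons (nseq n.+1 z) t; val u].

Lemma three_block_covering (x : word v 3 n.+2) :
  exists2 p, p \in setX [set~ [tuple of nseq n.+2 z]] setT &
    dRT x (three_block_word p) <= 2 * n.+2 - 1.
Proof.
set t := nth z (block z x 1) n.+1.
have middle : drop n.+1 (block z x 1) = drop n.+1 (rcons (nseq n.+1 z) t).
  by rewrite (drop_nth_last z) ?size_tuple // -cats1 drop_size_cat ?size_nseq.
case: (eqVneq (block z x 0) [tuple of nseq n.+2 z]) => [X0_z | X0_nz].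
  case: (eqVneq (block z x 2) [tuple of nseq n.+2 z]) => [X2_z | X2_nz].
    exists ([tuple of o :: nseq n.+1 z], t).
      by rewrite !inE -val_eqE /= eqseq_cons (negbTE o_neq_z).
    apply: (dRT_of_blocks_le (ks := [:: 1; n.+1; 1])); first by rewrite /=; lia.
    move=> [|[|[|//]]] _ /=.
    - by rewrite X0_z.
    - exact: middle.
    - by rewrite X2_z.
  exists (block z x 2, t); first by rewrite !inE X2_nz.
  apply: (dRT_of_blocks_le (ks := [:: n.+2; n.+1; 0])); first by rewrite /=; lia.
  move=> [|[|[|//]]] _ /=.
  - by rewrite !drop_oversize ?size_tuple.
  - exact: middle.
  - by [].
exists (block z x 0, t); first by rewrite !inE X0_nz.
apply: (dRT_of_blocks_le (ks := [:: 0; n.+1; n.+2])); first by rewrite /=; lia.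
move=> [|[|[|//]]] _ /=.
- by [].
- exact: middle.
- by rewrite !drop_oversize ?size_tuple.
Qed.

Lemma K_RT_three_blocks : K_RT v 3 n.+2 (2 * n.+2 - 1) <= v * (v ^ n.+2 - 1).
Proof.
apply: leq_trans (K_RT_le_card three_block_covering) _.
by rewrite cardsX cardsC1 cardsT card_tuple card_ord subn1 mulnC.
Qed.

End ThreeBlocks.

Theorem theorem4 (v s : nat) (hv : 2 <= v) (hs : 2 <= s) :
  K_RT v 2 s s <= v ^ (s - 2) * (v ^ 2 - 1) /\
  K_RT v 3 s (2 * s - 1) <= v * (v ^ s - 1).
Proof.
pose z := Ordinal (ltnW hv); pose o := Ordinal hv.
have o_neq_z : o != z by [].
case: s hs => [|[|n]] // _; rewrite !subSS subn0.
by split; [exact: K_RT_two_blocks o_neq_z | exact: K_RT_three_blocks o_neq_z].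
Qed.
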